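(* Let $1\le p<\infty$, $\Omega=\mathbb K^{\mathbb Z_+}$, let $\mu=\bigotimes_{n\ge0}\mu_n$ be a product of Borel probability measures on $\mathbb K$, and let $\mathbf w$ be a sequence of non-zero scalars with $\sum_{n=1}^\infty\frac1{|w_1\cdots w_n|^p}<\infty$. If $\mu$ is $B_{\mathbf w}$-invariant and $\int_{\mathbb K}|t|^p\,d\mu_0(t)<\infty$, then $\mu(\ell_p(\mathbb Z_+))=1$.
   Context: $\mathbb K\in\{\mathbb R,\mathbb C\}$; $\Omega$ has the product topology and Borel $\sigma$-algebra, and $\ell_p(\mathbb Z_+)$ is a Borel subset of it. $B_{\mathbf w}:\Omega\to\Omega$ is $(B_{\mathbf w}t)_j=w_{j+1}t_{j+1}$; invariance means $\mu(B_{\mathbf w}^{-1}B)=\mu(B)$ for Borel $B$. *)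

From HB Require Import structures.
From mathcomp Require Import all_boot all_order all_algebra.
From mathcomp Require Import all_classical all_reals all_analysis.
From mathcomp Require Export complex.

Set Implicit Arguments.
Unset Strict Implicit.
Unset Printing Implicit Defensive.

Import Order.TTheory GRing.Theory Num.Theory.
Local Open Scope classical_set_scope.
Local Open Scope ring_scope.

(* The scalar field K (= R or C) as a pointed ring, so that measurable
   structures can be built on it and on K^nat. *)
Definition ptd (K : Type) : Type := K.
HB.instance Definition _ (K : nzRingType) := GRing.NzRing.on (ptd K).
HB.instance Definition _ (K : nzRingType) := isPointed.Build (ptd K) 0.

Section defs.
Context (R : realType) (K : nzRingType) (nrm : K -> R).

Definition openballs : set (set (ptd K)) :=
  [set B | exists (c : K) (r : R), B = [set z : ptd K | nrm (z - c) < r]].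

(* The Borel measurable space on K: sigma-algebra generated by open balls
   (for K = R or C, separable metric spaces, this is the Borel sigma-algebra). *)
Definition BorelK : Type := g_sigma_algebraType openballs.

Definition Omega0 : Type := nat -> ptd K.

Definition cylinders : set (set Omega0) :=
  [set S | exists (n : nat) (A : set (ptd K)),
     <<s openballs >> A /\ S = [set t : Omega0 | A (t n)]].

(* Omega with the product sigma-algebra (= Borel sigma-algebra of the product
   topology, K being second countable). *)
Definition Omega : Type := g_sigma_algebraType cylinders.

Definition is_product_measure (mu : probability Omega R)
    (mun : nat -> probability BorelK R) : Prop :=
  forall (n : nat) (A : nat -> set BorelK),
    (forall i, (i < n)%N -> measurable (A i)) ->
    mu [set t : Omega | forall i, (i < n)%N -> A i (t i)] =
      (\prod_(i < n) mun i (A i))%E.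

Definition Bw (w : nat -> K) (t : Omega) : Omega :=
  fun j => (w j.+1 * t j.+1 : ptd K).

Definition shift_invariant (w : nat -> K) (mu : probability Omega R) : Prop :=
  forall B : set Omega, measurable B -> mu (Bw w @^-1` B) = mu B.

Definition lp (p : R) : set Omega :=
  [set t | (\sum_(0 <= n <oo) ((nrm (t n)) `^ p)%:E < +oo)%E].

Definition corollary_statement : Prop :=
  forall (p : R) (mun : nat -> probability BorelK R)
         (mu : probability Omega R) (w : nat -> K),
    1 <= p ->
    is_product_measure mu mun ->
    (forall n, (0 < n)%N -> w n != 0) ->
    (\sum_(1 <= n <oo) (((nrm (\prod_(1 <= i < n.+1) w i)) `^ p)^-1)%:E < +oo)%E ->
    shift_invariant w mu ->
    (\int[mun 0%N]_(t in [set: BorelK]) ((nrm t) `^ p)%:E < +oo)%E ->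
    mu (lp p) = 1%E.

End defs.

(* Put Y_n := w_1 ... w_n t_n. Since (B_w t)_n = w_(n+1) t_(n+1), we have
   Y_n o B_w = Y_(n+1), so B_w-invariance of mu makes E|Y_n|^p independent of
   n, hence equal to E|t_0|^p = \int |t|^p dmu_0 (the first marginal of mu is
   mu_0). Thus E|t_n|^p = |w_1 ... w_n|^-p E|t_0|^p is summable, so by monotone
   convergence E (\sum_n |t_n|^p) < oo and the series is finite mu-a.s. *)

From HB Require Import structures.
From mathcomp Require Import all_boot all_order all_algebra.
From mathcomp Require Import all_classical all_reals all_analysis.
From mathcomp Require Import complex measurable_realfun lebesgue_integral.
Set Implicit Arguments.
Unset Strict Implicit.
Unset Printing Implicit Defensive.
Import Order.TTheory GRing.Theory Num.Theory.
Local Open Scope classical_set_scope.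
Local Open Scope ring_scope.

Lemma probability_lt_pinfty_of_integral (R : realType) d (T : measurableType d)
    (P : probability T R) (F : T -> \bar R) :
  measurable_fun [set: T] F -> (forall t, (0 <= F t)%E) ->
  (\int[P]_(t in [set: T]) F t < +oo)%E ->
  P [set t | (F t < +oo)%E] = 1%E.
Proof.
move=> mF F0 intF.
have intF' : P.-integrable [set: T] F.
  apply/integrableP; split => //.
  by under eq_integral => t _ do rewrite gee0_abs //.
have [N [mN PN0 finN]] := integrable_ae measurableT intF'.
have mlt : measurable [set t | (F t < +oo)%E].
  by have := emeasurable_fun_infty_o measurableT mF +oo%E; rewrite setTI.
apply/eqP; rewrite eq_le probability_le1 //=.
have <- : P (~` N) = 1%E by rewrite probability_setC // PN0 sube0.
apply: le_measure; rewrite ?inE //; first exact: measurableC.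
move=> t Nt; apply: contrapT => Ft; apply: Nt; apply: finN => /(_ Logic.I).
by rewrite ge0_fin_numE.
Qed.

Section scalar_field.
Context (R : realType) (K : fieldType) (nrm : K -> R).
Hypothesis nrm_ge0 : forall z, 0 <= nrm z.
Hypothesis nrmM : forall a b, nrm (a * b) = nrm a * nrm b.
Hypothesis nrm_eq0 : forall z, nrm z = 0 -> z = 0.

Local Notation BK := (@BorelK R K nrm).
Local Notation OM := (@Omega R K nrm).
Local Notation Bw := (@Bw R K nrm).

Lemma nrm_gt0 (c : K) : c != 0 -> 0 < nrm c.
Proof. by move=> c0; rewrite lt_def nrm_ge0 andbT; apply: contra c0 => /eqP/nrm_eq0->. Qed.

Lemma measurable_coord n : measurable_fun [set: OM] (fun t : OM => t n : BK).
Proof. by move=> _ A mA; rewrite setTI; apply: sub_sigma_algebra; exists n, A. Qed.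

Lemma measurable_nrm : measurable_fun [set: BK] (nrm : BK -> R).
Proof.
apply: (measurability (@RGenInftyO.G R)).
  exact: RGenInftyO.measurableE.
move=> _ [_ [x ->] <-]; rewrite setTI; apply: sub_sigma_algebra; exists 0, x.
by apply/seteqP; split => z /=; rewrite subr0 in_itv.
Qed.

Lemma measurable_nrm_powR (p : R) :
  measurable_fun [set: BK] (fun z : BK => ((nrm z) `^ p)%:E).
Proof.
by apply/measurable_EFinP; exact: measurableT_comp (measurable_powR p) measurable_nrm.
Qed.

Lemma measurable_scale (c : K) : c != 0 ->
  measurable_fun [set: BK] (fun z : BK => c * z : BK).
Proof.
move=> c0; apply: (@measurability _ _ BK BK _ _ (openballs nrm)) => //.
move=> _ [_ [d [r ->]] <-]; rewrite setTI; apply: sub_sigma_algebra.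
exists (d / c), (r / nrm c); apply/seteqP.
have scaleB z : c * z - d = c * (z - d / c) by rewrite mulrBr mulrCA divff// mulr1.
by split => z /=; rewrite scaleB nrmM ltr_pdivlMr ?nrm_gt0// mulrC.
Qed.

Lemma measurable_Bw (w : nat -> K) : (forall n, (0 < n)%N -> w n != 0) ->
  measurable_fun [set: OM] (Bw w).
Proof.
move=> w0; apply: (@measurability _ _ OM OM _ _ (cylinders nrm)) => //.
move=> _ [_ [n [A [mA ->]]] <-]; rewrite setTI; apply: sub_sigma_algebra.
exists n.+1, ((fun z : BK => w n.+1 * z : BK) @^-1` A); split => //.
by rewrite -[X in _ X]setTI; exact: (measurable_scale (w0 _ _)).
Qed.

Lemma measurable_lp_series (p : R) : measurable_fun [set: OM]
  (fun t : OM => \sum_(0 <= n <oo) ((nrm (t n)) `^ p)%:E)%E.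
Proof.
apply: ge0_emeasurable_sum => [n t _ _|n _]; first by rewrite lee_fin powR_ge0.
exact: measurableT_comp (measurable_nrm_powR p) (measurable_coord n).
Qed.

Section invariant_product_measure.
Variables (p : R) (mun : nat -> probability BK R) (mu : probability OM R).
Variable w : nat -> K.
Hypothesis w_neq0 : forall n, (0 < n)%N -> w n != 0.
Hypothesis mu_prod : is_product_measure mu mun.
Hypothesis mu_inv : shift_invariant w mu.

Definition weight n : K := \prod_(1 <= i < n.+1) w i.

Lemma weight0 : weight 0 = 1.
Proof. by rewrite /weight big_geq. Qed.

Lemma weightS n : weight n.+1 = weight n * w n.+1.
Proof. by rewrite /weight big_nat_recr. Qed.

Lemma weight_neq0 n : weight n != 0.
Proof. by elim: n => [|n IH]; rewrite ?weight0 ?oner_neq0 // weightS mulf_neq0 ?w_neq0. Qed.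

Lemma integral_Bw (f : OM -> \bar R) :
  measurable_fun [set: OM] f -> (forall t, (0 <= f t)%E) ->
  (\int[mu]_(t in [set: OM]) f (Bw w t) = \int[mu]_(t in [set: OM]) f t)%E.
Proof.
move=> mf f0; rewrite -[in LHS](preimage_setT (Bw w)).
rewrite -(ge0_integral_pushforward (measurable_Bw w_neq0)) //.
apply: eq_measure_integral; first exact: measurable_Bw.
by move=> ? B mB _; exact: mu_inv.
Qed.

Lemma integral_coord0 (h : BK -> \bar R) :
  measurable_fun [set: BK] h -> (forall z, (0 <= h z)%E) ->
  (\int[mu]_(t in [set: OM]) h (t 0%N) = \int[mun 0%N]_(z in [set: BK]) h z)%E.
Proof.
move=> mh h0; rewrite -[in LHS](preimage_setT (fun t : OM => t 0%N : BK)).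
rewrite -(ge0_integral_pushforward (measurable_coord 0)) //.
apply: eq_measure_integral; first exact: measurable_coord.
move=> ? A mA _; rewrite /pushforward.
have := @mu_prod 1%N (fun=> A) (fun _ _ => mA); rewrite big_ord1 /= => <-; congr (mu _).
by apply/seteqP; split => t /= At; [move=> i; rewrite ltnS leqn0 => /eqP-> | exact: At].
Qed.

Lemma measurable_weighted_coord n :
  measurable_fun [set: OM] (fun t : OM => ((nrm (weight n * t n)) `^ p)%:E).
Proof.
exact: measurableT_comp (measurable_nrm_powR p)
  (measurableT_comp (measurable_scale (weight_neq0 n)) (measurable_coord n)).
Qed.

Lemma integral_weighted_coord n :
  (\int[mu]_(t in [set: OM]) ((nrm (weight n * t n)) `^ p)%:E =
   \int[mun 0%N]_(z in [set: BK]) ((nrm z) `^ p)%:E)%E.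
Proof.
elim: n => [|n IH].
  under eq_integral do rewrite weight0 mul1r.
  apply: integral_coord0; first exact: measurable_nrm_powR.
  by move=> z; rewrite lee_fin powR_ge0.
rewrite -IH -[RHS]integral_Bw.
- by apply: eq_integral => t _; rewrite /Bw weightS mulrA.
- exact: measurable_weighted_coord.
- by move=> t; rewrite lee_fin powR_ge0.
Qed.

Lemma integral_coord n :
  (\int[mu]_(t in [set: OM]) ((nrm (t n)) `^ p)%:E =
   ((nrm (weight n)) `^ p)^-1%:E *
     \int[mun 0%N]_(z in [set: BK]) ((nrm z) `^ p)%:E)%E.
Proof.
rewrite -(integral_weighted_coord n) -ge0_integralZl_EFin //.
- apply: eq_integral => t _; rewrite -EFinM nrmM powRM // mulKf //.
  by rewrite gt_eqF // powR_gt0 // nrm_gt0 // weight_neq0.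
- by move=> t _; rewrite lee_fin powR_ge0.
- exact: measurable_weighted_coord.
- by rewrite invr_ge0 powR_ge0.
Qed.

Lemma integral_lp_series_lt_pinfty :
  (\sum_(1 <= n <oo) (((nrm (weight n)) `^ p)^-1)%:E < +oo)%E ->
  (\int[mun 0%N]_(z in [set: BK]) ((nrm z) `^ p)%:E < +oo)%E ->
  (\int[mu]_(t in [set: OM]) \sum_(0 <= n <oo) ((nrm (t n)) `^ p)%:E < +oo)%E.
Proof.
set I := (\int[mun 0%N]_(z in [set: BK]) _)%E => c_sum I_lt.
have c_ge0 n : (0 <= (((nrm (weight n)) `^ p)^-1)%:E)%E.
  by rewrite lee_fin invr_ge0 powR_ge0.
have I_ge0 : (0 <= I)%E by apply: integral_ge0 => z _; rewrite lee_fin powR_ge0.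
have I_fin : I \is a fin_num by rewrite ge0_fin_numE.
rewrite integral_nneseries //; first last.
- by move=> n t _; rewrite lee_fin powR_ge0.
- by move=> n; exact: measurableT_comp (measurable_nrm_powR p) (measurable_coord n).
under eq_eseriesr => n _ do rewrite integral_coord -/I -(fineK I_fin) muleC.
rewrite nneseriesZl // (nneseries_split 0 1) // add0n big_nat1 fineK //.
by rewrite lte_mul_pinfty // lte_add_pinfty ?ltry.
Qed.

End invariant_product_measure.

Lemma corollary_statement_field : corollary_statement nrm.
Proof.
move=> p mun mu w _ mu_prod w_neq0 c_sum mu_inv I_lt.
apply: probability_lt_pinfty_of_integral; first exact: measurable_lp_series.
  by move=> t; apply: nneseries_ge0 => n _; rewrite lee_fin powR_ge0.
exact: (integral_lp_series_lt_pinfty w_neq0 mu_prod mu_inv).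
Qed.

End scalar_field.

Theorem corollary5p4 (R : realType) :
  corollary_statement (fun x : R => `|x|) /\
  corollary_statement (fun z : R[i] => `|z : Rcomplex R|).
Proof.
split; apply: corollary_statement_field => [z|a b|z].
- exact: normr_ge0.
- exact: normrM.
- exact: normr0_eq0.
- exact: normr_ge0.
- exact: ComplexField.Normc.normcM.
- exact: ComplexField.Normc.eq0_normc.
Qed.
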